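(* Let $R$ be a $*$-ring, let $a\in R$, and let $n\geq 3$ be an integer. Then $a$ is core invertible if and only if there exists $b\in R$ such that ${}^{\circ}a=Rb$ and $u=a^{*}a^{n}+b^{*}b$ is invertible. In this case $$a^{\mathrm{core}}=a^{n-1}u^{-1}a^{*}.$$
   Context: A $*$-ring is an associative ring with identity $1$ and an involution $*$, i.e. $(a^* )^*=a$, $(ab)^*=b^*a^*$ and $(a+b)^*=a^*+b^*$. For $a\in R$: ${}^{\circ}a=\{x\in R : xa=0\}$ and $Rb=\{xb : x\in R\}$. An element $a$ is core invertible if there is $x\in R$ with $(ax)^*=ax$, $ax^2=x$ and $xa^2=a$. Such an $x$ is unique and denoted $a^{\mathrm{core}}$. ''Invertible'' means having a two-sided inverse in $R$. *)

From HB Require Import structures.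
From mathcomp Require Import all_boot all_order all_algebra.
Set Implicit Arguments. Unset Strict Implicit. Unset Printing Implicit Defensive.
Import GRing.Theory.
Local Open Scope ring_scope.

Definition involution (R : pzRingType) (star : R -> R) : Prop :=
  [/\ forall a, star (star a) = a,
      forall a b, star (a * b) = star b * star a
    & forall a b, star (a + b) = star a + star b].

Definition is_core_inverse (R : pzRingType) (star : R -> R) (a x : R) : Prop :=
  [/\ star (a * x) = a * x, a * x ^+ 2 = x & x * a ^+ 2 = a].

Definition core_invertible (R : pzRingType) (star : R -> R) (a : R) : Prop :=
  exists x, is_core_inverse star a x.

Definition is_inverse (R : pzRingType) (u v : R) : Prop := u * v = 1 /\ v * u = 1.
Definition invertible (R : pzRingType) (u : R) : Prop := exists v, is_inverse u v.

Definition lann (R : pzRingType) (a : R) : R -> Prop := fun x => x * a = 0.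
Definition lprincipal (R : pzRingType) (b : R) : R -> Prop := fun y => exists x, y = x * b.

From HB Require Import structures.
From mathcomp Require Import all_boot all_order all_algebra.
Import GRing.Theory.
Local Open Scope ring_scope.

(* If x is the core inverse of a, then p = a x and q = x a are idempotents with
   p hermitian, and b = 1 - p generates the left annihilator of a; an explicit
   inverse of u = a' a^(n+1) + b' b (writing ' for the involution) is
   x^(n+1) x' + (1 - q) (1 - q').  Conversely, if b a = 0 and u is invertible,
   the identity (a^(n+1))' a^(n+1) = u' a^n shows that e = a^(n+1) u^-1 a' is a
   hermitian idempotent with e a^2 = a^2, which makes x = a^n u^-1 a' a core
   inverse as soon as n >= 2.  The formula for x holds for every n and only
   uses that u is left invertible. *)

Lemma compl_mul_of_mulL {R : pzRingType} {y z : R} :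
  y * z = y -> (1 - y) * (1 - z) = 1 - z.
Proof. by move=> yz; rewrite mulrBl mul1r mulrBr mulr1 yz subrr subr0. Qed.

Lemma compl_mul_of_mulR {R : pzRingType} {y z : R} :
  y * z = z -> (1 - y) * (1 - z) = 1 - y.
Proof. by move=> yz; rewrite mulrBl mul1r mulrBr mulr1 yz opprB addrA subrK. Qed.

Section StarRing.

Context {R : pzRingType} {star : R -> R}.
Hypothesis inv : involution star.

Lemma starK x : star (star x) = x. Proof. by case: inv. Qed.
Lemma starM x y : star (x * y) = star y * star x. Proof. by case: inv. Qed.
Lemma starD x y : star (x + y) = star x + star y. Proof. by case: inv. Qed.

Lemma star1 : star 1 = 1.
Proof. by have := starM 1 (star 1); rewrite mul1r starK mul1r. Qed.

Lemma starN x : star (- x) = - star x.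
Proof.
have star0 : star 0 = 0.
  by apply: (addrI (star 0)); rewrite -starD !addr0.
by apply: (addrI (star x)); rewrite -starD !subrr.
Qed.

Lemma starB x y : star (x - y) = star x - star y.
Proof. by rewrite starD starN. Qed.

Lemma hermitian_of_mul_star {e : R} : star e * e = e -> star e = e.
Proof. by move=> ee; rewrite -ee starM starK ee. Qed.

Section CoreInverse.

Context {a x : R}.
Hypothesis core : is_core_inverse star a x.

Lemma core_hermitian : star (a * x) = a * x. Proof. by case: core. Qed.
Lemma core_mulKx : a * (x * x) = x. Proof. by case: core; rewrite expr2. Qed.
Lemma core_mulKa : x * (a * a) = a. Proof. by case: core; rewrite !expr2. Qed.

Lemma core_axa : a * x * a = a.
Proof. by rewrite -{2}core_mulKa mulrA -(mulrA a x x) core_mulKx core_mulKa. Qed.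

Lemma core_xax : x * a * x = x.
Proof. by rewrite -{2}core_mulKx !mulrA -(mulrA x a a) core_mulKa -mulrA core_mulKx. Qed.

Lemma core_exp_x k : a ^+ k * x ^+ k.+1 = x.
Proof.
elim: k => [|k IHk]; first by rewrite mul1r expr1.
have -> : a ^+ k.+1 * x ^+ k.+2 = a ^+ k * (a * (x * x)) * x ^+ k.
  by rewrite exprSr !exprS !mulrA.
by rewrite core_mulKx -mulrA -exprS.
Qed.

Lemma core_exp_a k : x ^+ k * a ^+ k.+1 = a.
Proof.
elim: k => [|k IHk]; first by rewrite mul1r expr1.
have -> : x ^+ k.+1 * a ^+ k.+2 = x ^+ k * (x * (a * a)) * a ^+ k.
  by rewrite exprSr !exprS !mulrA.
by rewrite core_mulKa -mulrA -exprS.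
Qed.

Lemma core_exp_mul k : a ^+ k.+1 * x ^+ k.+1 = a * x.
Proof. by rewrite exprS -mulrA core_exp_x. Qed.

Lemma star_core_mul : star a * (a * x) = star a.
Proof. by rewrite -core_hermitian -starM core_axa. Qed.

Lemma lann_core y : lann a y <-> lprincipal (1 - a * x) y.
Proof.
split=> [ya | [z ->]]; first by exists y; rewrite mulrBr mulr1 mulrA ya mul0r subr0.
by rewrite /lann -mulrA mulrBl mul1r core_axa subrr mulr0.
Qed.

Lemma core_unit_inverse n :
  is_inverse (star a * a ^+ n.+1 + star (1 - a * x) * (1 - a * x))
             (x ^+ n.+1 * star x + (1 - x * a) * (1 - star (x * a))).
Proof.
have pp : a * x * (a * x) = a * x by rewrite mulrA core_axa.
have pq : a * x * (x * a) = x * a by rewrite mulrA -(mulrA a) core_mulKx.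
have qp : x * a * (a * x) = a * x by rewrite mulrA -(mulrA x) core_mulKa.
have pqs : a * x * star (x * a) = a * x.
  by rewrite -{1}core_hermitian -starM qp core_hermitian.
have qsp : star (x * a) * (a * x) = star (x * a).
  by rewrite -{1}core_hermitian -starM pq.
have bb : star (1 - a * x) * (1 - a * x) = 1 - a * x.
  by rewrite starB star1 core_hermitian (compl_mul_of_mulL pp).
have xpa : x ^+ n.+1 * a ^+ n.+1 = x * a by rewrite exprS -mulrA core_exp_a.
have sx_p : star x * (a * x) = star x by rewrite -core_hermitian -starM -mulrA core_mulKx.
have p_an : a * x * a ^+ n.+1 = a ^+ n.+1 by rewrite exprS mulrA core_axa.
have an_q : a ^+ n.+1 * (1 - x * a) = 0.
  by rewrite exprSr mulrBr mulr1 -mulrA (mulrA a) core_axa subrr.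
have p_xn : (1 - a * x) * x ^+ n.+1 = 0.
  by rewrite exprS mulrBl mul1r -mulrA (mulrA x x) (mulrA a) core_mulKx subrr.
have qs_a : (1 - star (x * a)) * star a = 0.
  by rewrite mulrBl mul1r -starM mulrA core_axa subrr.
rewrite bb; split.
- have t1 : star a * a ^+ n.+1 * (x ^+ n.+1 * star x) = star (x * a).
    by rewrite mulrA -(mulrA (star a)) core_exp_mul star_core_mul starM.
  have t2 : star a * a ^+ n.+1 * ((1 - x * a) * (1 - star (x * a))) = 0.
    by rewrite -mulrA (mulrA (a ^+ _)) an_q mul0r mulr0.
  have t3 : (1 - a * x) * (x ^+ n.+1 * star x) = 0 by rewrite mulrA p_xn mul0r.
  have t4 : (1 - a * x) * ((1 - x * a) * (1 - star (x * a))) = 1 - star (x * a).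
    by rewrite mulrA (compl_mul_of_mulR pq) (compl_mul_of_mulL pqs).
  by rewrite mulrDl (mulrDr (star a * _)) (mulrDr (1 - a * x)) t1 t2 t3 t4
             addr0 add0r addrC subrK.
- have t1 : x ^+ n.+1 * star x * (star a * a ^+ n.+1) = x * a.
    by rewrite mulrA -(mulrA _ (star x)) -starM core_hermitian -mulrA p_an xpa.
  have t2 : x ^+ n.+1 * star x * (1 - a * x) = 0.
    by rewrite -mulrA mulrBr mulr1 sx_p subrr mulr0.
  have t3 : (1 - x * a) * (1 - star (x * a)) * (star a * a ^+ n.+1) = 0.
    by rewrite -mulrA (mulrA (1 - star _)) qs_a mul0r mulr0.
  have t4 : (1 - x * a) * (1 - star (x * a)) * (1 - a * x) = 1 - x * a.
    by rewrite -mulrA (compl_mul_of_mulL qsp) (compl_mul_of_mulR qp).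
  by rewrite mulrDr (mulrDl _ _ (star a * _)) (mulrDl _ _ (1 - a * x)) t1 t2 t3 t4
             addr0 add0r addrC subrK.
Qed.

End CoreInverse.

Section CoreInverseOfUnit.

Context {a b v : R} {n : nat}.
Local Notation u := (star a * a ^+ n.+3 + star b * b).
Hypotheses (ba : b * a = 0) (uv : u * v = 1) (vu : v * u = 1).
Local Notation x := (a ^+ n.+2 * v * star a).

Lemma star_unit_norm : star (a ^+ n.+3) * a ^+ n.+3 = star u * a ^+ n.+2.
Proof.
have ba_exp : b * a ^+ n.+2 = 0 by rewrite exprS mulrA ba mul0r.
rewrite starD (starM (star a)) (starM (star b)) !starK mulrDl -!mulrA ba_exp mulr0 addr0.
by rewrite -exprS.
Qed.

Lemma unit_core_projection : star (a * x) = a * x /\ a * x * (a * a) = a * a.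
Proof.
have sv_su : star v * star u = 1 by rewrite -starM uv star1.
have ax : a * x = a ^+ n.+3 * v * star a by rewrite 2!mulrA -exprS.
have sax : star (a * x) = a * star v * star (a ^+ n.+3).
  by rewrite ax starM starK (starM (a ^+ _)) mulrA.
have e_idem : star (a * x) * (a * x) = a * x.
  rewrite sax ax.
  have -> : a * star v * star (a ^+ n.+3) * (a ^+ n.+3 * v * star a) =
            a * (star v * (star (a ^+ n.+3) * a ^+ n.+3)) * v * star a.
    by rewrite !mulrA.
  by rewrite star_unit_norm (mulrA (star v)) sv_su mul1r -exprS.
have e_herm := hermitian_of_mul_star e_idem.
split=> //.
have su : star u = star (a ^+ n.+3) * a + star b * b.
  by rewrite starD (starM (star a)) (starM (star b)) !starK.
rewrite -{1}e_herm sax.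
transitivity (a * (star v * star u) * a); last by rewrite sv_su mulr1.
by rewrite su mulrDr mulrDr mulrDl -!mulrA ba !mulr0 addr0.
Qed.

Lemma core_inverse_of_unit : is_core_inverse star a x.
Proof.
have [e_herm e_a2] := unit_core_projection.
have a_left : v * (star a * a ^+ n.+4) = a.
  rewrite -[RHS]mul1r -vu -mulrA mulrDl -(mulrA (star b)) ba mulr0 addr0.
  by rewrite -(mulrA (star a)) -exprSr.
split=> //.
- have -> : a * x ^+ 2 = a * x * (a * a) * a ^+ n * v * star a.
    by rewrite expr2 (exprS a n.+1) (exprS a n) !mulrA.
  by rewrite e_a2 -(mulrA a a) -(exprS a n) -(exprS a n.+1).
- pose t := a ^+ n.+1 * v * star a * (a * a) - 1.
  have y_t : x * (a * a) - a = a * t.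
    by rewrite /t mulrBr mulr1 (exprS a n.+1) !mulrA.
  have aat : a * (a * t) = 0 by rewrite -y_t mulrBr mulrA e_a2 subrr.
  have at0 : a * t = 0.
    by rewrite -[a in a * t]a_left (exprSr a n.+3) (exprSr a n.+2) -!mulrA aat !mulr0.
  by apply: subr0_eq; rewrite expr2 y_t at0.
Qed.

End CoreInverseOfUnit.

Section CoreInverseFormula.

Context {a b v x : R} {n : nat}.
Local Notation u := (star a * a ^+ n.+1 + star b * b).
Hypotheses (ba : b * a = 0) (vu : v * u = 1) (core : is_core_inverse star a x).

Lemma core_inverse_formula : x = a ^+ n * v * star a.
Proof.
have bx : b * x = 0 by rewrite -(core_mulKx core) mulrA ba mul0r.
have u_x : u * (x ^+ n.+1 * star x) = star (x * a).
  have bxn : b * x ^+ n.+1 = 0 by rewrite exprS mulrA bx mul0r.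
  rewrite mulrDl -(mulrA (star b)) (mulrA b) bxn mul0r mulr0 addr0.
  by rewrite mulrA -(mulrA (star a)) (core_exp_mul core) (star_core_mul core) starM.
have xform : x ^+ n.+1 * star x = v * star (x * a).
  by rewrite -[LHS]mul1r -vu -mulrA u_x.
have xsa : x ^+ n.+1 * star x * star a = x ^+ n.+1.
  by rewrite -mulrA -starM (core_hermitian core) exprSr -mulrA (mulrA x a x) (core_xax core).
have sxa_a : star (x * a) * star a = star a by rewrite -starM mulrA (core_axa core).
by rewrite -sxa_a mulrA -(mulrA (a ^+ n)) -xform -mulrA xsa (core_exp_x core).
Qed.

End CoreInverseFormula.

End StarRing.

Theorem theorem2p6 (R : pzRingType) (star : R -> R) (a : R) (n : nat) :
  involution star -> (3 <= n)%N ->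
  (core_invertible star a <->
     exists b : R, (forall y, lann a y <-> lprincipal b y) /\
                   invertible (star a * a ^+ n + star b * b))
  /\
  (forall (b x v : R),
     (forall y, lann a y <-> lprincipal b y) ->
     is_inverse (star a * a ^+ n + star b * b) v ->
     is_core_inverse star a x ->
     x = a ^+ n.-1 * v * star a).
Proof.
move=> inv; case: n => [|[|[|n]]] // _.
have annihilates b : (forall y, lann a y <-> lprincipal b y) -> b * a = 0.
  by move=> ann; apply/(ann b).2; exists 1; rewrite mul1r.
split; first split.
- case=> x core; exists (1 - a * x); split; first exact: lann_core core.
  by eexists; exact: (core_unit_inverse inv core n.+2).
- case=> b [ann [v [uv vu]]]; eexists.
  exact: (core_inverse_of_unit inv (annihilates b ann) uv vu).
- move=> b x v ann [_ vu] core.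
  exact: (core_inverse_formula inv (annihilates b ann) vu core).
Qed.
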